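(* Consider a cellular network with $n$ base stations $\mathcal{N}=\{1,\dots,n\}$, base station $i$ serving a nonempty set $\mathcal{J}_i$ of users (pairwise disjoint), channel gains $g_{kj}>0$, noise power $\sigma^2>0$, and for $\mathbf{p}>\mathbf{0}$, $\mathbf{x}\ge\mathbf{0}$, $\mathbf{r}>\mathbf{0}$, $$f_i(\mathbf{x};\mathbf{r},\mathbf{p})=\sum_{j\in\mathcal{J}_i}\frac{r_{ij}}{\log\Big(1+\frac{p_i g_{ij}}{\sum_{k\ne i} p_k g_{kj} x_k+\sigma^2}\Big)}.$$ Let $\mathbf{d}_{\min}>\mathbf{0}$ and consider Problem P0: $$\min_{\mathbf{p}>\mathbf{0},\ \mathbf{r}>\mathbf{0},\ \mathbf{0}<\mathbf{x}\le\mathbf{1}} \mathbf{x}^T\mathbf{p}\quad\text{s.t.}\quad \mathbf{x}=\mathbf{f}(\mathbf{x};\mathbf{r},\mathbf{p}),\quad \mathbf{r}\ge\mathbf{d}_{\min}.$$ Then the optimal solution $(\mathbf{p}^\star,\mathbf{r}^\star,\mathbf{x}^\star)$ of Problem P0 has load vector $\mathbf{x}^\star=\mathbf{1}$.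
   Context: Vector inequalities are componentwise; $\mathbf{1}$ is the all-ones vector; $\log$ is natural logarithm. *)

From HB Require Import structures.
From mathcomp Require Import all_boot all_order all_algebra.
From mathcomp Require Import all_classical all_reals all_analysis.
Set Implicit Arguments. Unset Strict Implicit. Unset Printing Implicit Defensive.
Import Order.TTheory GRing.Theory Num.Theory.
Local Open Scope ring_scope.

(* Base stations are 'I_n, users are elements of a finite type U,
   J i : {set U} is the set of users served by base station i,
   g k j : channel gain from station k to user j, sigma2 : noise power. *)
Definition load (R : realType) (n : nat) (U : finType) (J : 'I_n -> {set U})
  (g : 'I_n -> U -> R) (sigma2 : R)
  (x : 'I_n -> R) (r : 'I_n -> U -> R) (p : 'I_n -> R) (i : 'I_n) : R :=
  \sum_(j in J i)
     r i j / ln (1 + p i * g i j /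
                  (\sum_(k < n | k != i) p k * g k j * x k + sigma2)).

Definition P0_feasible (R : realType) (n : nat) (U : finType) (J : 'I_n -> {set U})
  (g : 'I_n -> U -> R) (sigma2 : R) (dmin : 'I_n -> U -> R)
  (p : 'I_n -> R) (r : 'I_n -> U -> R) (x : 'I_n -> R) : Prop :=
  (forall i, 0 < p i) /\
  (forall i j, j \in J i -> 0 < r i j) /\
  (forall i, 0 < x i /\ x i <= 1) /\
  (forall i, x i = load J g sigma2 x r p i) /\
  (forall i j, j \in J i -> dmin i j <= r i j).

Definition P0_obj (R : realType) (n : nat) (x p : 'I_n -> R) : R :=
  \sum_(i < n) x i * p i.

From HB Require Import structures.
From mathcomp Require Import all_boot all_order all_algebra.
From mathcomp Require Import all_classical all_reals all_analysis.
From mathcomp Require Import ring lra.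
Import Order.TTheory GRing.Theory Num.Theory.
Set Implicit Arguments. Unset Strict Implicit. Unset Printing Implicit Defensive.
Local Open Scope ring_scope.

(* If a feasible point has x i < 1, let station i transmit all the time
   (x i := 1) at the lower power T * x i * p i with T < 1.  The other stations
   see less interference, and station i keeps enough capacity because
   x ln (1 + t) < ln (1 + x t) for 0 < x < 1 (strict concavity of ln), with a
   margin that is uniform over the finitely many users; rates can then be
   rescaled to restore the load equations.  The objective drops by
   (1 - T) x i p i > 0, contradicting optimality. *)

Section LnConcavity.
Variable R : realType.
Implicit Types s t a b : R.

Lemma ln_concave_comb s a b : 0 <= s -> s <= 1 -> 0 < a -> 0 < b ->
  s * ln a + (1 - s) * ln b <= ln (s * a + (1 - s) * b).
Proof.
move=> s0 s1 a0 b0.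
by have := @concave_ln R (Itv01 s0 s1) a b a0 b0; rewrite !convRE.
Qed.

Lemma mulr_ln1D_le s t : 0 <= s -> s <= 1 -> 0 <= t ->
  s * ln (1 + t) <= ln (1 + s * t).
Proof.
move=> s0 s1 t0.
have := ln_concave_comb (a := 1 + t) s0 s1 _ (@ltr01 R).
rewrite ln1 mulr0 addr0.
have -> : s * (1 + t) + (1 - s) * 1 = 1 + s * t by ring.
by apply; lra.
Qed.

Lemma ln1D_lt_2ln1D_half t : 0 < t -> ln (1 + t) < 2 * ln (1 + t / 2).
Proof.
move=> t0; have t20 : 0 < t / 2 by rewrite divr_gt0.
rewrite mulr_natl mulr2n -lnM ?posrE; try lra.
rewrite ltr_ln ?posrE ?mulr_gt0; try lra.
have -> : (1 + t / 2) * (1 + t / 2) = 1 + t + (t / 2) ^+ 2 by field.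
by rewrite ltrDl exprn_gt0.
Qed.

(* [u |-> ln (1 + u t) - u ln (1 + t)] is concave, vanishes at 0 and 1 and is
   positive at 1/2, so it is positive on (0, 1). *)
Lemma mulr_ln1D_lt s t : 0 < s -> s < 1 -> 0 < t ->
  s * ln (1 + t) < ln (1 + s * t).
Proof.
move=> s0 s1 t0; have half := ln1D_lt_2ln1D_half t0.
have t20 : 0 < t / 2 by rewrite divr_gt0.
have [s_le|s_gt] := lerP s (1 / 2).
- have le : 2 * s * ln (1 + t / 2) <= ln (1 + s * t).
    have -> : s * t = 2 * s * (t / 2) by field.
    by apply: mulr_ln1D_le; lra.
  nra.
- have le : 2 * (1 - s) * ln (1 + t / 2) + (1 - 2 * (1 - s)) * ln (1 + t)
            <= ln (1 + s * t).
    have -> : 1 + s * t =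
      2 * (1 - s) * (1 + t / 2) + (1 - 2 * (1 - s)) * (1 + t) by field.
    by apply: ln_concave_comb; lra.
  nra.
Qed.

Lemma uniform_ln1D_scaling (I : finType) s (t : I -> R) :
  0 < s -> s < 1 -> (forall j, 0 < t j) ->
  exists2 T, 0 < T < 1 & forall j, s * ln (1 + t j) <= ln (1 + T * (s * t j)).
Proof.
move=> s0 s1 t0.
have st0 j : 0 < s * t j by rewrite mulr_gt0.
have lnst0 j : 0 < ln (1 + s * t j) by rewrite ln_gt0 // ltrDl.
pose ratio j := s * ln (1 + t j) / ln (1 + s * t j).
have ratio0 j : 0 <= ratio j.
  by rewrite divr_ge0 ?mulr_ge0 ?ln_ge0 ?ltW ?ltrDl.
have ratio1 j : ratio j < 1 by rewrite ltr_pdivrMr // mul1r mulr_ln1D_lt.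
pose T := \big[Order.max/2^-1]_j ratio j.
have T0 : 0 < T by apply: lt_le_trans (bigmax_ge_id _ _ _ _); rewrite invr_gt0.
have T1 : T < 1.
  by apply: bigmax_lt => [|j _]; [rewrite invf_lt1 // ltr1n | exact: ratio1].
exists T; first by rewrite T0 T1.
move=> j; have ratioT : ratio j <= T by exact: le_bigmax.
have -> : s * ln (1 + t j) = ratio j * ln (1 + s * t j) by rewrite mulfVK ?gt_eqF.
apply: le_trans (mulr_ln1D_le (ratio0 j) (ltW (ratio1 j)) (ltW (st0 j))) _.
by rewrite ler_ln ?posrE ?lerD2l ?ler_pM2r // ltr_wpDr // mulr_ge0 // ltW.
Qed.

End LnConcavity.

Section Network.
Variables (R : realType) (n : nat) (U : finType).
Variables (J : 'I_n -> {set U}) (g : 'I_n -> U -> R) (sigma2 : R).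
Variable dmin : 'I_n -> U -> R.
Hypotheses (hg : forall k j, 0 < g k j) (hsigma : 0 < sigma2).
Implicit Types (p x : 'I_n -> R) (r : 'I_n -> U -> R).

Definition interference_noise p x k j :=
  \sum_(l < n | l != k) p l * g l j * x l + sigma2.

Definition spectral_efficiency p x k j :=
  ln (1 + p k * g k j / interference_noise p x k j).

Lemma load_spectral_efficiency x r p i :
  load J g sigma2 x r p i = \sum_(j in J i) r i j / spectral_efficiency p x i j.
Proof. by []. Qed.

Lemma interference_noise_gt0 p x k j : (forall l, 0 < p l) -> (forall l, 0 <= x l) ->
  0 < interference_noise p x k j.
Proof.
move=> hp hx; rewrite ltr_wpDl // sumr_ge0 // => l _.
by rewrite !mulr_ge0 // ltW.
Qed.

Lemma interference_noise_eq p x p' x' k j :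
  (forall l, l != k -> p' l = p l) -> (forall l, l != k -> x' l = x l) ->
  interference_noise p' x' k j = interference_noise p x k j.
Proof. by move=> ep ex; congr (_ + _); apply: eq_bigr => l lk; rewrite ep ?ex. Qed.

Lemma spectral_efficiency_gt0 p x k j : (forall l, 0 < p l) -> (forall l, 0 <= x l) ->
  0 < spectral_efficiency p x k j.
Proof.
move=> hp hx; rewrite ln_gt0 // ltrDl divr_gt0 ?mulr_gt0 //.
exact: interference_noise_gt0.
Qed.

Lemma spectral_efficiency_le p x p' x' k j :
  (forall l, 0 < p l) -> (forall l, 0 <= x l) ->
  (forall l, 0 < p' l) -> (forall l, 0 <= x' l) ->
  p k <= p' k -> (forall l, l != k -> p' l * x' l <= p l * x l) ->
  spectral_efficiency p x k j <= spectral_efficiency p' x' k j.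
Proof.
move=> hp hx hp' hx' hpk hint.
have D0 := interference_noise_gt0 k j hp hx.
have D0' := interference_noise_gt0 k j hp' hx'.
have leD : interference_noise p' x' k j <= interference_noise p x k j.
  rewrite lerD2r; apply: ler_sum => l lk.
  by rewrite mulrAC [X in _ <= X]mulrAC ler_pM2r // hint.
rewrite ler_ln ?posrE; try by rewrite ltr_wpDr // divr_ge0 ?mulr_ge0 ?ltW.
rewrite lerD2l; apply: ler_pM.
- by rewrite mulr_ge0 // ltW.
- by rewrite invr_ge0 ltW.
- by rewrite ler_pM2r.
- by rewrite lef_pV2.
Qed.

(* Multiplying r k j by the ratio of the new to the old value of
   [x k * spectral_efficiency _ _ k j] turns the load equation of (p, r, x)
   into that of (p', r', x') and does not decrease any rate. *)
Lemma P0_feasible_rescale_rates p r x p' x' :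
  P0_feasible J g sigma2 dmin p r x ->
  (forall l, 0 < p' l) -> (forall l, 0 < x' l /\ x' l <= 1) ->
  (forall k j, j \in J k -> x k * spectral_efficiency p x k j <=
                            x' k * spectral_efficiency p' x' k j) ->
  exists r', P0_feasible J g sigma2 dmin p' r' x'.
Proof.
move=> [hp [hr [hx [hload hd]]]] hp' hx' hle.
have hx0 l : 0 <= x l by apply: ltW; case: (hx l).
have hx0' l : 0 <= x' l by apply: ltW; case: (hx' l).
have hxk k : 0 < x k by case: (hx k).
have hSE k j := spectral_efficiency_gt0 k j hp hx0.
have hSE' k j := spectral_efficiency_gt0 k j hp' hx0'.
pose r' k j := r k j * (x' k * spectral_efficiency p' x' k j) /
                       (x k * spectral_efficiency p x k j).
have le_r' k j : j \in J k -> r k j <= r' k j.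
  by move=> hj; rewrite ler_pdivlMr ?mulr_gt0 // ler_pM2l ?hr ?hle.
exists r'; split; [done | split; [|split; [done | split]]].
- by move=> k j hj; apply: lt_le_trans (le_r' _ _ hj); exact: hr.
- move=> i; rewrite load_spectral_efficiency.
  have -> : \sum_(j in J i) r' i j / spectral_efficiency p' x' i j =
            x' i / x i * \sum_(j in J i) r i j / spectral_efficiency p x i j.
    rewrite mulr_sumr; apply: eq_bigr => j _.
    by rewrite /r'; field; rewrite ?gt_eqF.
  by rewrite -load_spectral_efficiency -hload divfK ?gt_eqF.
- by move=> k j hj; apply: le_trans (le_r' _ _ hj); exact: hd.
Qed.

Lemma P0_obj_decrease_of_unsaturated p r x i :
  P0_feasible J g sigma2 dmin p r x -> x i < 1 ->
  exists p' r' x', P0_feasible J g sigma2 dmin p' r' x' /\ P0_obj x' p' < P0_obj x p.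
Proof.
move=> feas xi1; have [hp [_ [hx _]]] := feas.
have hx0 l : 0 <= x l by apply: ltW; case: (hx l).
have xi0 : 0 < x i by case: (hx i).
pose t j := p i * g i j / interference_noise p x i j.
have ht j : 0 < t j by rewrite divr_gt0 ?mulr_gt0 ?interference_noise_gt0.
have [T /andP[T0 T1] hT] := uniform_ln1D_scaling xi0 xi1 ht.
pose p' l := if l == i then T * x i * p i else p l.
pose x' l := if l == i then 1 else x l.
have hp' l : 0 < p' l by rewrite /p'; case: eqP; rewrite ?mulr_gt0.
have hx' l : 0 < x' l /\ x' l <= 1 by rewrite /x'; case: eqP.
have hx0' l : 0 <= x' l by case: (hx' l) => /ltW.
have [r' feas'] : exists r', P0_feasible J g sigma2 dmin p' r' x'.
  apply: (P0_feasible_rescale_rates feas hp' hx') => k j _.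
  have [->|ki] := eqVneq k i.
  - have eqD : interference_noise p' x' i j = interference_noise p x i j.
      by apply: interference_noise_eq => l /negbTE li; rewrite /p' /x' li.
    rewrite /x' eqxx mul1r /spectral_efficiency eqD /p' eqxx.
    have -> : T * x i * p i * g i j / interference_noise p x i j = T * (x i * t j).
      by rewrite /t !mulrA.
    exact: hT.
  - have -> : x' k = x k by rewrite /x' (negbTE ki).
    rewrite ler_pM2l; last by case: (hx k).
    apply: (spectral_efficiency_le j hp hx0 hp' hx0').
    + by rewrite /p' (negbTE ki).
    + move=> l _; rewrite /p' /x'; have [->|//] := eqVneq l i.
      have : 0 < x i * p i by rewrite mulr_gt0.
      nra.
exists p', r', x'; split => //.
rewrite /P0_obj (bigD1 i) //= [X in _ < X](bigD1 i) //=.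
rewrite (eq_bigr (fun l => x l * p l)) => [|l /negbTE li]; last by rewrite /x' /p' li.
rewrite ltrD2r /x' /p' !eqxx mul1r.
have : 0 < x i * p i by rewrite mulr_gt0.
nra.
Qed.

End Network.

Theorem lemma2 (R : realType) (n : nat) (U : finType) (J : 'I_n -> {set U})
  (g : 'I_n -> U -> R) (sigma2 : R) (dmin : 'I_n -> U -> R)
  (hJne : forall i, J i != finset.set0)
  (hJdisj : forall i k, i != k -> [disjoint J i & J k])
  (hg : forall k j, 0 < g k j)
  (hsigma : 0 < sigma2)
  (hdmin : forall i j, j \in J i -> 0 < dmin i j)
  (pstar : 'I_n -> R) (rstar : 'I_n -> U -> R) (xstar : 'I_n -> R)
  (hfeas : P0_feasible J g sigma2 dmin pstar rstar xstar)
  (hopt : forall p r x, P0_feasible J g sigma2 dmin p r x ->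
            P0_obj xstar pstar <= P0_obj x p) :
  forall i, xstar i = 1.
Proof.
move=> i; have [_ [_ [hx _]]] := hfeas; have [_ xi_le1] := hx i.
have [xi_lt1|xi_ge1] := ltrP (xstar i) 1; last exact/le_anti/andP.
have [p [r [x [feas lt_obj]]]] :=
  P0_obj_decrease_of_unsaturated hg hsigma hfeas xi_lt1.
by have := hopt _ _ _ feas; rewrite leNgt lt_obj.
Qed.
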